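(* Let $n\ge 2$, $N=\binom{n}{2}$, and let $F$ be a fundamental basic block with exactly $n$ reducible elements and nullity $\eta(F)=N$ (denoted $\mathrm{CF}(n)$). Let $u_1<u_2<\cdots<u_n$ be its reducible elements. Then $F$ has the adjunct representation $$F = C_0\,]^{u_2}_{u_1}\{c_1\}\,]^{u_3}_{u_1}\{c_2\}\cdots]^{u_n}_{u_1}\{c_{n-1}\}\,]^{u_3}_{u_2}\{c_n\}\cdots]^{u_j}_{u_i}\{c_k\}\cdots]^{u_n}_{u_{n-1}}\{c_N\},$$ in which every adjunct chain is a singleton $\{c_k\}$, the adjunct pairs are exactly the pairs $(u_i,u_j)$ with $1\le i<j\le n$, each occurring once, the pair $(u_i,u_j)$ carrying $\{c_k\}$ with $k=(i-1)n-\binom{i}{2}+j-i$, and $C_0$ is the maximal chain $u_1\prec x_1\prec u_2\prec x_2\prec\cdots\prec u_{n-1}\prec x_{n-1}\prec u_n$, where $x_i\parallel c_k$ for $k=(i-1)n-\binom{i}{2}+1$ (the element attached to the pair $(u_i,u_{i+1})$). Consequently $|F|=2n-1+\binom{n}{2}$, $F$ has $(2n-2)+2\binom{n}{2}$ coverings, and $\eta(F)=\binom n2$.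
   Context: For a finite poset $P$, $a\prec b$ means $b$ covers $a$; the nullity $\eta(P)$ is $|E|-|V|+c$ for the cover graph of $P$ (undirected graph on $P$ with edges the coverings), $c$ its number of components. $x\parallel y$ means $x,y$ incomparable. An element $x$ of a lattice is join-reducible (meet-reducible) if $x=y\vee z$ ($x=y\wedge z$) for some $y,z$ both different from $x$; reducible if join- or meet-reducible. An element of a poset is doubly irreducible if it has at most one upper cover and at most one lower cover. Adjunct operation: for disjoint lattices $L_1,L_2$ and $a<b$ in $L_1$ with $a\not\prec b$, $L_1\,]_a^b\,L_2$ is $L_1\cup L_2$ ordered by: $x\le y$ iff $x\le y$ within $L_1$ or within $L_2$, or $x\in L_1$, $y\in L_2$, $x\le a$, or $x\in L_2$, $y\in L_1$, $b\le y$; $(a,b)$ is the adjunct pair. An RC-lattice is a finite lattice whose reducible elements are pairwise comparable; every RC-lattice is dismantlable and hence an adjunct of chains $C_0\,]_{a_1}^{b_1}C_1\cdots]_{a_r}^{b_r}C_r$ with $C_0$ a maximal chain, the representation being unique up to the order of the adjunct pairs. A poset $B$ is a basic block if it has one element, or has no doubly irreducible elements, or removal of (any) doubly irreducible element from $B$ reduces its nullity by one. A fundamental basic block is an RC-lattice that is a basic block and in whose adjunct representation all adjunct pairs are distinct. *)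

From HB Require Import structures.
From mathcomp Require Import all_boot all_order all_algebra.
Set Implicit Arguments. Unset Strict Implicit. Unset Printing Implicit Defensive.
Import Order.TTheory GRing.Theory.
Local Open Scope order_scope.

Section Defs.
Context {d : Order.disp_t} {T : finLatticeType d}.

Definition coversIn (S : {set T}) (a b : T) : bool :=
  [&& a \in S, b \in S, a < b & [forall c in S, ~~ ((a < c) && (c < b))]].

Definition covers (a b : T) : bool := coversIn setT a b.

Definition cover_graph (S : {set T}) : rel T :=
  fun x y => coversIn S x y || coversIn S y x.

Definition cover_edges (S : {set T}) : {set T * T} :=
  [set p | coversIn S p.1 p.2].

Definition nullity (S : {set T}) : int :=
  (#|cover_edges S|%:Z - #|S|%:Z + (n_comp (cover_graph S) (mem S))%:Z)%R.

Definition join_reducible (x : T) : bool :=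
  [exists y : T, exists z : T, [&& y != x, z != x & x == y `|` z]].
Definition meet_reducible (x : T) : bool :=
  [exists y : T, exists z : T, [&& y != x, z != x & x == y `&` z]].
Definition reducible (x : T) : bool := join_reducible x || meet_reducible x.

Definition doubly_irreducible_in (S : {set T}) (x : T) : Prop :=
  x \in S /\
  (forall y z, coversIn S x y -> coversIn S x z -> y = z) /\
  (forall y z, coversIn S y x -> coversIn S z x -> y = z).

Definition basic_block_in (S : {set T}) : Prop :=
  #|S| = 1%N \/
  (forall x, ~ doubly_irreducible_in S x) \/
  (forall x, doubly_irreducible_in S x -> nullity (S :\ x) = (nullity S - 1)%R).

Definition RC_lattice : Prop :=
  forall x y : T, reducible x -> reducible y -> x >=< y.

Definition is_lattice_on (S : {set T}) : Prop :=
  forall x y, x \in S -> y \in S ->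
    (exists2 j, j \in S & [/\ x <= j, y <= j &
        forall z, z \in S -> x <= z -> y <= z -> j <= z]) /\
    (exists2 m, m \in S & [/\ m <= x, m <= y &
        forall z, z \in S -> z <= x -> z <= y -> z <= m]).

Definition is_chain (s : seq T) : Prop :=
  forall x y, x \in s -> y \in s -> x >=< y.

Definition maximal_chain (s : seq T) : Prop :=
  is_chain s /\ forall z, z \notin s -> exists2 y, y \in s & ~~ (z >=< y).

(* Adjunct representation  C0 ]_{a1}^{b1} C1 ... ]_{ar}^{br} Cr  of the whole
   lattice T: [steps] is the list of (C_k, (a_k, b_k)).  The k-th step adjoins
   the nonempty chain C_k to L_{k-1} = C0 ∪ C1 ∪ ... ∪ C_{k-1} (itself a lattice)
   at the pair a_k < b_k of L_{k-1}, with a_k not covered by b_k in L_{k-1},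
   and the order of T restricted to L_k is the adjunct order.  The chains
   partition T, and C0 is a maximal chain of T. *)
Definition adjunct_step (L1 : {set T}) (C : seq T) (a b : T) : Prop :=
  [/\ C != [::], is_chain C & is_lattice_on L1] /\
  [/\ a \in L1, b \in L1, a < b & ~~ coversIn L1 a b] /\
  (forall x y, x \in L1 -> y \in C -> (x <= y) = (x <= a)) /\
  (forall x y, x \in L1 -> y \in C -> (y <= x) = (b <= x)).

Definition adjunct_rep (C0 : seq T) (steps : seq (seq T * (T * T))) : Prop :=
  uniq (C0 ++ flatten (map fst steps)) /\
  (forall x : T, x \in C0 ++ flatten (map fst steps)) /\
  maximal_chain C0 /\
  forall s1 C a b s2, steps = s1 ++ (C, (a, b)) :: s2 ->
    adjunct_step [set x in C0 ++ flatten (map fst s1)] C a b.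

Definition fundamental_basic_block : Prop :=
  RC_lattice /\ basic_block_in setT /\
  exists C0 steps, adjunct_rep C0 steps /\ uniq (map snd steps).

End Defs.

Definition lex_pairs (n : nat) : seq (nat * nat) :=
  [seq p <- [seq (i, j) | i <- iota 0 n, j <- iota 0 n] | (p.1 < p.2)%N].

Definition zigzag {A : Type} (n : nat) (u x : nat -> A) : seq A :=
  flatten [seq [:: u i; x i] | i <- iota 0 n.-1] ++ [:: u n.-1].

(* The adjunct pairs of [F] are distinct pairs of reducible elements, so there
   are at most [C(n, 2)] of them, while a lattice with an adjunct representation
   of [r] pairs has nullity at most [r]: a covering either is the unique one
   below its top among elements appearing no later, or it leaves an adjoined
   chain towards the upper element of its pair.  Since [eta(F) = C(n, 2)], every
   pair [u_i < u_j] of reducible elements is an adjunct pair; hence no covering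
   joins two reducible elements, and the adjunct order yields an irreducible
   element covering [u_i] and covered by [u_j].  In a basic block, removing an
   irreducible (thus doubly irreducible) element [z] must lower the nullity,
   which forces an element other than [z] strictly between the two covers of
   [z]; consequently both covers of [z] are reducible.  Counting coverings (two
   per irreducible element) against the nullity leaves exactly
   [C(n, 2) + n - 1] irreducible elements: one [c_k] per pair [(u_i, u_j)] and
   one more element [x_i] between [u_i] and [u_(i+1)], obtained from the
   element bypassing [c_k].  The chain [u_1 < x_1 < ... < u_n] is maximal, and
   the [c_k] are adjoined to it as singletons. *)

From mathcomp Require Import all_boot all_order all_algebra zify.
Import Order.TTheory GRing.Theory.
Local Open Scope order_scope.
Set Implicit Arguments. Unset Strict Implicit. Unset Printing Implicit Defensive.

Lemma cardsU_disjoint (A : finType) (X Y : {set A}) :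
  [disjoint X & Y] -> #|X :|: Y| = (#|X| + #|Y|)%N.
Proof. by move=> dXY; apply/eqP; rewrite (leq_card_setU X Y).2. Qed.

Section CoverTheory.
Context {d : Order.disp_t} {T : finLatticeType d}.
Implicit Types (S : {set T}) (a b p q t u v w x y : T).

Lemma coversInP S a b :
  reflect [/\ a \in S, b \in S, a < b & forall c, c \in S -> ~~ ((a < c) && (c < b))]
          (coversIn S a b).
Proof.
apply: (iffP and4P) => [[aS bS ab /forall_inP gap]|[aS bS ab gap]]; split => //.
by apply/forall_inP.
Qed.

Lemma coversP a b : reflect (a < b /\ forall c, ~~ ((a < c) && (c < b))) (covers a b).
Proof.
apply: (iffP (coversInP setT a b)) => [[_ _ ab gap]|[ab gap]]; split => // c.
by apply: gap; rewrite inE.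
Qed.

Lemma covers_lt a b : covers a b -> a < b.
Proof. by case/coversP. Qed.

Lemma covers_coversIn S a b : a \in S -> b \in S -> covers a b -> coversIn S a b.
Proof. by move=> aS bS /coversP [ab gap]; apply/coversInP; split => // c _; apply: gap. Qed.

Lemma covers_comparable_eq a a' b : covers a b -> covers a' b -> a >=< a' -> a = a'.
Proof.
move=> /coversP [ab gap] /coversP [a'b gap'] /orP [|];
  rewrite le_eqVlt => /orP [/eqP // | lt].
- by move: (gap a'); rewrite lt a'b.
- by move: (gap' a); rewrite lt ab.
Qed.

Definition down_card x := #|[set w | w < x]|.
Definition up_card x := #|[set w | x < w]|.

Lemma down_card_lt a b : a < b -> (down_card a < down_card b)%N.
Proof.
move=> ab; apply: proper_card; apply/properP; split.
  by apply/subsetP => w; rewrite !inE => /lt_trans; apply.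
by exists a; rewrite !inE ?ab ?ltxx.
Qed.

Lemma up_card_lt a b : a < b -> (up_card b < up_card a)%N.
Proof.
move=> ab; apply: proper_card; apply/properP; split.
  by apply/subsetP => w; rewrite !inE; apply: lt_trans.
by exists b; rewrite !inE ?ab ?ltxx.
Qed.

(* The element with fewest elements below it is the least one. *)
Lemma exists_bottom x0 : exists b, forall y, b <= y.
Proof.
have [b _ bmin] := arg_minnP down_card (isT : predT x0).
exists b => y; have := bmin (b `&` y) isT; apply: contraTT => nby.
rewrite -ltnNge; apply: down_card_lt; rewrite lt_neqAle leIl andbT.
by apply: contraNneq nby => <-; apply: leIr.
Qed.

Lemma exists_coversIn_above S u v : u \in S -> v \in S -> u < v ->
  exists2 t, coversIn S u t & t <= v.
Proof.
move=> uS vS uv; pose P := [pred t | [&& t \in S, u < t & t <= v]].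
have Pv : P v by rewrite /= vS uv lexx.
have [t /and3P [tS ut tv] tmin] := arg_minnP down_card Pv.
exists t => //; apply/coversInP; split => // c cS; apply/negP => /andP [uc ct].
have := tmin c; rewrite /= cS uc (le_trans (ltW ct) tv) => /(_ isT).
by rewrite leqNgt down_card_lt.
Qed.

Lemma exists_coversIn_below S u v : u \in S -> v \in S -> u < v ->
  exists2 t, u <= t & coversIn S t v.
Proof.
move=> uS vS uv; pose P := [pred t | [&& t \in S, u <= t & t < v]].
have Pu : P u by rewrite /= uS uv lexx.
have [t /and3P [tS ut tv] tmin] := arg_minnP up_card Pu.
exists t => //; apply/coversInP; split => // c cS; apply/negP => /andP [tc cv].
have := tmin c; rewrite /= cS cv (le_trans ut (ltW tc)) => /(_ isT).
by rewrite leqNgt up_card_lt.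
Qed.

Lemma not_coversIn_between S u v : u \in S -> v \in S -> u < v -> ~~ coversIn S u v ->
  exists2 t, t \in S & u < t < v.
Proof.
move=> uS vS uv ncov.
have [/exists_inP [t tS tuv]|/exists_inP none] := boolP [exists t in S, u < t < v].
  by exists t.
case/negP: ncov; apply/coversInP; split => // c cS.
by apply/negP => ucv; apply: none; exists c.
Qed.

Lemma n_comp_cover_graph_bottom S b : b \in S -> (forall y, y \in S -> b <= y) ->
  n_comp (cover_graph S) S = 1%N.
Proof.
move=> bS bot.
have csym : connect_sym (cover_graph S).
  by apply: sym_connect_sym => x y; rewrite /cover_graph orbC.
have conn y : y \in S -> connect (cover_graph S) b y.
  have [k] := ubnP (down_card y); elim: k y => // k IH y lt_yk yS.
  have [<-|ne] := eqVneq b y; first exact: connect0.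
  have lt_by : b < y by rewrite lt_neqAle ne bot.
  have [t _ ty] := exists_coversIn_below bS yS lt_by.
  have /coversInP [tS _ lt_ty _] := ty.
  apply: connect_trans (IH t _ tS) (connect1 _); last by rewrite /cover_graph ty.
  by have := down_card_lt lt_ty; lia.
rewrite -(n_comp_connect csym b); apply: eq_n_comp_r => y.
apply/idP/idP => [yS|]; first by rewrite inE; apply: conn.
have closedS : closed (cover_graph S) S.
  by move=> a c; rewrite /cover_graph => /orP [] /and4P [aS cS _ _]; rewrite aS cS.
by rewrite inE => /(closed_connect closedS) <-.
Qed.

Lemma nullity_setT x0 : nullity [set: T] = (#|cover_edges [set: T]|%:Z - #|T|%:Z + 1)%R.
Proof.
have [b bot] := exists_bottom x0.
by rewrite /nullity (n_comp_cover_graph_bottom (b := b)) ?cardsT ?inE.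
Qed.

Lemma le_unique_lower_cover x p w : covers p x ->
  (forall p', covers p' x -> p' = p) -> w < x -> w <= p.
Proof.
move=> px uniq_p wx.
by have [t wt /uniq_p <-] := exists_coversIn_below (in_setT w) (in_setT x) wx.
Qed.

Lemma le_unique_upper_cover x q w : covers x q ->
  (forall q', covers x q' -> q' = q) -> x < w -> q <= w.
Proof.
move=> xq uniq_q xw.
by have [t /uniq_q <-] := exists_coversIn_above (in_setT x) (in_setT w) xw.
Qed.

Lemma lower_covers_join_reducible x p q :
  covers p x -> covers q x -> p != q -> join_reducible x.
Proof.
move=> px qx pq; apply/existsP; exists p; apply/existsP; exists q.
have /coversP [ltpx gap_p] := px; have /coversP [ltqx gap_q] := qx.
rewrite (lt_eqF ltpx) (lt_eqF ltqx) /=.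
have [//|ne] := eqVneq x (p `|` q); exfalso.
have lt : p `|` q < x by rewrite lt_neqAle eq_sym ne leUx !ltW.
have [E|ne'] := eqVneq p (p `|` q).
  have : q <= p by rewrite E leUr.
  rewrite le_eqVlt eq_sym (negbTE pq) /= => ltqp.
  by move: (gap_q p); rewrite ltqp ltpx.
by move: (gap_p (p `|` q)); rewrite lt lt_neqAle ne' leUl.
Qed.

Lemma upper_covers_meet_reducible x p q :
  covers x p -> covers x q -> p != q -> meet_reducible x.
Proof.
move=> xp xq pq; apply/existsP; exists p; apply/existsP; exists q.
have /coversP [ltxp gap_p] := xp; have /coversP [ltxq gap_q] := xq.
rewrite (gt_eqF ltxp) (gt_eqF ltxq) /=.
have [//|ne] := eqVneq x (p `&` q); exfalso.
have lt : x < p `&` q by rewrite lt_neqAle ne lexI !ltW.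
have [E|ne'] := eqVneq p (p `&` q).
  have : p <= q by rewrite E leIr.
  rewrite le_eqVlt (negbTE pq) /= => ltpq.
  by move: (gap_q p); rewrite ltpq ltxp.
by move: (gap_p (p `&` q)); rewrite lt lt_neqAle eq_sym ne' leIl.
Qed.

Lemma irreducible_doubly_irreducible x : ~~ reducible x -> doubly_irreducible_in setT x.
Proof.
move=> xN; split; first by rewrite inE.
split => y z xy xz; apply/eqP; apply: contraNT xN => ne; rewrite /reducible.
- by rewrite (upper_covers_meet_reducible xy xz ne) orbT.
- by rewrite (lower_covers_join_reducible xy xz ne).
Qed.

(* A join [x `|` y] other than [x] and [y] is join-reducible, and dually. *)
Lemma is_lattice_on_reducibles S : (forall y, reducible y -> y \in S) -> is_lattice_on S.
Proof.
move=> redS x y xS yS; split.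
- exists (x `|` y); last by split; rewrite ?leUl ?leUr // => z _; rewrite leUx => -> ->.
  have [->//|nx] := eqVneq (x `|` y) x; have [->//|ny] := eqVneq (x `|` y) y.
  apply: redS; apply/orP; left; apply/existsP; exists x; apply/existsP; exists y.
  by rewrite eq_sym nx eq_sym ny eqxx.
- exists (x `&` y); last by split; rewrite ?leIl ?leIr // => z _; rewrite lexI => -> ->.
  have [->//|nx] := eqVneq (x `&` y) x; have [->//|ny] := eqVneq (x `&` y) y.
  apply: redS; apply/orP; right; apply/existsP; exists x; apply/existsP; exists y.
  by rewrite eq_sym nx eq_sym ny eqxx.
Qed.

End CoverTheory.

Section Removal.
Context {d : Order.disp_t} {T : finLatticeType d}.
Implicit Types (p q w x y : T).

Lemma coversxx x : covers x x = false.
Proof. by apply/negP => /covers_lt; rewrite ltxx. Qed.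

Definition lower_covers x := [set p | covers p x].
Definition upper_covers x := [set q | covers x q].

Definition bypassed x : bool :=
  [exists p, exists q, exists w,
    [&& covers p x, covers x q, w != x, p < w & w < q]].

Definition edges_avoiding x :=
  [set e in cover_edges [set: T] | (e.1 != x) && (e.2 != x)].

Lemma cover_edges_setT_split x :
  cover_edges [set: T] = edges_avoiding x :|:
    (setX (lower_covers x) [set x] :|: setX [set x] (upper_covers x)).
Proof.
apply/setP => [[e1 e2]]; rewrite !inE /= -/(covers e1 e2) -/(covers e1 x) -/(covers x e2).
have [->|e1x] := eqVneq e1 x; have [->|e2x] := eqVneq e2 x;
  by rewrite ?coversxx ?andbT ?andbF ?orbF.
Qed.

Lemma cover_edges_setD1 x : ~~ bypassed x ->
  cover_edges (setT :\ x) =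
    edges_avoiding x :|: setX (lower_covers x) (upper_covers x).
Proof.
move=> nbp; apply/setP => [[p q]]; rewrite !inE /= -/(covers p q).
apply/idP/idP => [/coversInP|].
  rewrite !inE !andbT => -[px qx pq gap].
  have gap' c : c != x -> ~~ ((p < c) && (c < q)) by move=> cx; apply: gap; rewrite !inE cx.
  have [cpq|ncpq] := boolP (covers p q); first by rewrite px qx.
  have [t _ /andP [pt tq]] := not_coversIn_between (in_setT p) (in_setT q) pq ncpq.
  have tx : t = x by apply/eqP/negPn/negP => /gap'; rewrite pt tq.
  subst t; apply/orP; right; apply/andP; split; apply/coversP; split => // c.
    by apply/negP => /andP [pc cx]; move: (gap' c (negbT (lt_eqF cx))); rewrite pc (lt_trans cx tq).
  by apply/negP => /andP [xc cq]; move: (gap' c (negbT (gt_eqF xc))); rewrite cq (lt_trans pt xc).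
case/orP => [/and3P [cpq px qx]|/andP [px xq]].
  by apply: covers_coversIn; rewrite // !inE ?px ?qx.
have ltpx := covers_lt px; have ltxq := covers_lt xq.
apply/coversInP; split; rewrite ?inE ?(lt_eqF ltpx) ?(gt_eqF ltxq) //.
  exact: lt_trans ltxq.
move=> w; rewrite !inE andbT => wx; apply/negP => /andP [pw wq].
case/negP: nbp; apply/existsP; exists p; apply/existsP; exists q; apply/existsP; exists w.
by rewrite px xq wx pw wq.
Qed.

Lemma card_cover_edges_setT x : #|cover_edges [set: T]| =
  (#|edges_avoiding x| + (#|lower_covers x| + #|upper_covers x|))%N.
Proof.
rewrite (cover_edges_setT_split x) !cardsU_disjoint ?cardsX ?cards1 ?muln1 ?mul1n //.
  rewrite disjoints_subset; apply/subsetP => -[p q].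
  rewrite !inE /= => /andP [px _]; apply/negP => /andP [/eqP pE _].
  by move: px; rewrite pE coversxx.
rewrite disjoints_subset; apply/subsetP => -[p q].
by rewrite !inE /= => /and3P [_ /negbTE -> /negbTE ->]; rewrite !andbF.
Qed.

Lemma card_cover_edges_setD1 x : ~~ bypassed x -> #|cover_edges (setT :\ x)| =
  (#|edges_avoiding x| + #|lower_covers x| * #|upper_covers x|)%N.
Proof.
move=> nbp; rewrite cover_edges_setD1 // cardsU_disjoint ?cardsX //.
rewrite disjoints_subset; apply/subsetP => -[p q].
rewrite !inE /= => /and3P [cpq _ _]; apply/negP => /andP [px xq].
by move/coversP: cpq => [_ /(_ x)]; rewrite (covers_lt px) (covers_lt xq).
Qed.

Lemma exists_other x : (1 < #|T|)%N -> exists y, y != x.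
Proof.
move=> T2; apply/existsP; move: T2; rewrite -cardsT (cardsD1 x) inE ltnS card_gt0.
by case/set0Pn => y; rewrite !inE andbT => yx; apply/existsP; exists y.
Qed.

Lemma card_covers_gt0 x : (1 < #|T|)%N -> (0 < #|lower_covers x| + #|upper_covers x|)%N.
Proof.
move=> T2; have [b bot] := exists_bottom x; rewrite addn_gt0.
have [<-|bx] := eqVneq b x.
  have [y yb] := exists_other b T2.
  have ltby : b < y by rewrite lt_neqAle eq_sym yb bot.
  have [q bq _] := exists_coversIn_above (in_setT b) (in_setT y) ltby.
  by apply/orP; right; apply/card_gt0P; exists q; rewrite inE.
have ltbx : b < x by rewrite lt_neqAle bx bot.
have [p _ px] := exists_coversIn_below (in_setT b) (in_setT x) ltbx.
by apply/orP; left; apply/card_gt0P; exists p; rewrite inE.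
Qed.

(* Either the bottom element survives, or [x] was the bottom and its unique
   upper cover becomes the bottom. *)
Lemma n_comp_cover_graph_setD1 x : (1 < #|T|)%N ->
  (forall q q', covers x q -> covers x q' -> q = q') ->
  n_comp (cover_graph (setT :\ x)) (setT :\ x) = 1%N.
Proof.
move=> T2 uniq_up; have [b bot] := exists_bottom x.
have [eb|bx] := eqVneq b x; last first.
  by apply: (n_comp_cover_graph_bottom (b := b)) => [|y _]; rewrite ?inE ?bx.
subst b; have [y yx] := exists_other x T2.
have ltxy : x < y by rewrite lt_neqAle eq_sym yx bot.
have [q xq _] := exists_coversIn_above (in_setT x) (in_setT y) ltxy.
apply: (n_comp_cover_graph_bottom (b := q)) => [|z]; first by rewrite !inE (gt_eqF (covers_lt xq)).
rewrite !inE andbT => zx; apply: le_unique_upper_cover (xq) _ _.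
  by move=> q' xq'; apply: uniq_up xq' xq.
by rewrite lt_neqAle eq_sym zx bot.
Qed.

(* Removing an unbypassed [x] deletes [#lower + #upper] coverings and creates
   [#lower * #upper] new ones; as a doubly irreducible [x] has at most one
   cover on each side and at least one in total, the nullity is unchanged. *)
Lemma nullity_setD1_unbypassed x : (1 < #|T|)%N -> doubly_irreducible_in setT x ->
  ~~ bypassed x -> nullity (setT :\ x) = nullity [set: T].
Proof.
move=> T2 [_ [uniq_up uniq_lo]] nbp.
have lo_le1 : (#|lower_covers x| <= 1)%N.
  by apply/card_le1_eqP => p p'; rewrite !inE => pc p'c; apply: uniq_lo.
have up_le1 : (#|upper_covers x| <= 1)%N.
  by apply/card_le1_eqP => q q'; rewrite !inE => qc q'c; apply: uniq_up.
have lo_up := card_covers_gt0 x T2.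
rewrite (nullity_setT x) /nullity (n_comp_cover_graph_setD1 T2 uniq_up).
rewrite card_cover_edges_setD1 // (card_cover_edges_setT x) -cardsT (cardsD1 x [set: T]) inE.
nia.
Qed.

End Removal.

Section Sequences.
Local Open Scope nat_scope.

Lemma mem_lex_pairs n p : (p \in lex_pairs n) = (p.1 < p.2 < n).
Proof.
rewrite /lex_pairs mem_filter; case: p => i j /=.
case: (ltnP i j) => //= ij.
apply/allpairsP/idP => [[[i' j'] [_]]|jn]; first by rewrite mem_iota => /andP [_ ?] [_ ->].
by exists (i, j); rewrite !mem_iota /= (ltn_trans ij jn) jn.
Qed.

Lemma uniq_lex_pairs n : uniq (lex_pairs n).
Proof. by rewrite filter_uniq // allpairs_uniq ?iota_uniq // => -[? ?] [? ?]. Qed.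

Lemma size_lex_pairs n : size (lex_pairs n) = 'C(n, 2).
Proof.
have count_gt i m : count (fun j => i < j) (iota 0 m) = m - i.+1.
  elim: m => // m IH; rewrite -[in iota _ _]addn1 iotaD count_cat IH /= add0n addn0.
  by case: (ltnP i m) => h; lia.
rewrite size_filter count_flatten -map_comp.
rewrite (eq_map (g := fun i => n - i.+1)); last by move=> i /=; rewrite count_map count_gt.
rewrite -bin2_sum sumnE big_map big_nat_rev /=.
by rewrite /index_iota subn0; apply: eq_bigr => i _; rewrite add0n.
Qed.

Lemma mem_flatten_has (A : eqType) (a : A) (ss : seq (seq A)) :
  (a \in flatten ss) = has (fun s => a \in s) ss.
Proof. by apply/flattenP/hasP => -[s sin ins]; exists s. Qed.

Lemma zigzagP (A : eqType) n (u x : nat -> A) y : 0 < n ->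
  reflect ((exists2 i, i < n & y = u i) \/ (exists2 i, i < n.-1 & y = x i))
          (y \in zigzag n u x).
Proof.
move=> n0; rewrite /zigzag mem_cat inE; apply: (iffP orP).
  case=> [/flatten_mapP [i]|/eqP ->]; last by left; exists n.-1 => //; lia.
  rewrite mem_iota => /andP [_ lti]; rewrite !inE => /orP [] /eqP ->;
    [left | right]; exists i => //; lia.
case=> -[i lti ->]; last by left; apply/flatten_mapP; exists i; rewrite ?mem_iota ?inE ?eqxx ?orbT.
case: (ltnP i n.-1) => [ltin|gein]; last by right; apply/eqP; congr u; lia.
by left; apply/flatten_mapP; exists i; rewrite ?mem_iota ?inE ?eqxx.
Qed.

Lemma size_zigzag (A : Type) n (u x : nat -> A) : 0 < n -> size (zigzag n u x) = 2 * n - 1.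
Proof.
move=> n0; rewrite /zigzag size_cat size_flatten /shape -map_comp /=.
have sumn2 (s : seq nat) : sumn [seq 2 | _ <- s] = 2 * size s by elim: s => //= _ s ->; lia.
by rewrite sumn2 size_iota; lia.
Qed.

End Sequences.

Section AdjunctRepresentation.
Context {d : Order.disp_t} {T : finLatticeType d}.
Implicit Types (k m : nat) (a b p q t u v w x y z : T).
Variables (t0 : T) (C0 : seq T) (steps : seq (seq T * (T * T))).
Hypothesis rep : adjunct_rep C0 steps.

Let dflt : seq T * (T * T) := ([::], (t0, t0)).

(* [adj_chain k] is the chain C_(k+1) of the paper, adjoined at the pair
   [(adj_lo k, adj_hi k)] to [adj_prefix k] = C_0 u ... u C_k; the element [x]
   lies in C_(stage x).  For [k >= size steps] these are junk values built
   from [t0]. *)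
Definition adj_chain k := (nth dflt steps k).1.
Definition adj_lo k := (nth dflt steps k).2.1.
Definition adj_hi k := (nth dflt steps k).2.2.
Definition stage x :=
  if x \in C0 then 0%N else (find (fun C => x \in C) (map fst steps)).+1.
Definition adj_prefix k := [set x in C0 ++ flatten (map fst (take k steps))].

Lemma in_later_chain x : x \notin C0 -> has (fun C => x \in C) (map fst steps).
Proof.
by case: rep => _ [cov _] xC0; move: (cov x); rewrite mem_cat (negbTE xC0) mem_flatten_has.
Qed.

Lemma mem_adj_prefix k x : (x \in adj_prefix k) = (stage x <= k)%N.
Proof.
rewrite inE mem_cat /stage; case: ifP => //= /negbT /in_later_chain hx.
by rewrite mem_flatten_has map_take has_take.
Qed.

Lemma stage_le x : (stage x <= size steps)%N.
Proof.
rewrite /stage; case: ifP => // /negbT /in_later_chain.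
by rewrite has_find size_map.
Qed.

Lemma adjunct_step_at k : (k < size steps)%N ->
  adjunct_step (adj_prefix k) (adj_chain k) (adj_lo k) (adj_hi k).
Proof.
case: rep => _ [_ [_ Hstep]] ks; apply: (Hstep _ _ _ _ (drop k.+1 steps)).
rewrite /adj_chain /adj_lo /adj_hi; case E : (nth dflt steps k) => [C [a b]] /=.
by rewrite -E -drop_nth ?cat_take_drop.
Qed.

Section Step.
Variable k : nat.
Hypothesis ks : (k < size steps)%N.

Lemma adj_chain_is_chain : is_chain (adj_chain k).
Proof. by case: (adjunct_step_at ks) => [[]]. Qed.

Lemma exists_mem_adj_chain : exists y, y \in adj_chain k.
Proof.
case: (adjunct_step_at ks) => [[+ _ _] _].
by case: (adj_chain k) => // y s _; exists y; rewrite inE eqxx.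
Qed.

Lemma stage_adj_lo : (stage (adj_lo k) <= k)%N.
Proof. by case: (adjunct_step_at ks) => _ [[]]; rewrite mem_adj_prefix. Qed.

Lemma stage_adj_hi : (stage (adj_hi k) <= k)%N.
Proof. by case: (adjunct_step_at ks) => _ [[_]]; rewrite mem_adj_prefix. Qed.

Lemma adj_lo_lt_hi : adj_lo k < adj_hi k.
Proof. by case: (adjunct_step_at ks) => _ [[]]. Qed.

Lemma adj_pair_not_coversIn : ~~ coversIn (adj_prefix k) (adj_lo k) (adj_hi k).
Proof. by case: (adjunct_step_at ks) => _ [[]]. Qed.

Lemma stage_adj_chain x : x \in adj_chain k -> stage x = k.+1.
Proof.
move=> xC; have [_ [[_ _ ab _] [below above]]] := adjunct_step_at ks.
have xNL : x \notin adj_prefix k.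
  apply/negP => xL; have := below _ _ xL xC; have := above _ _ xL xC.
  rewrite lexx => /esym hix /esym xlo.
  by have := lt_le_trans ab (le_trans hix xlo); rewrite ltxx.
have xL : x \in adj_prefix k.+1.
  rewrite inE (take_nth dflt ks) -cats1 map_cat flatten_cat !mem_cat /=.
  by move: xC; rewrite /adj_chain => ->; rewrite !orbT.
by apply/eqP; rewrite eqn_leq -mem_adj_prefix xL ltnNge -mem_adj_prefix.
Qed.

End Step.

Lemma stageS_adj_chain x k : stage x = k.+1 -> (k < size steps)%N /\ x \in adj_chain k.
Proof.
rewrite /stage; case: ifP => // /negbT /in_later_chain hx [E].
have ks : (k < size steps)%N by rewrite -E -(size_map fst) -has_find.
split=> //; have := nth_find [::] hx; rewrite E (nth_map dflt) //.
Qed.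

Lemma le_stageS k x y : (stage x <= k)%N -> stage y = k.+1 -> (x <= y) = (x <= adj_lo k).
Proof.
move=> xk /stageS_adj_chain [ks yC]; have [_ [_ [below _]]] := adjunct_step_at ks.
by apply: below; rewrite ?mem_adj_prefix.
Qed.

Lemma ge_stageS k x y : (stage x <= k)%N -> stage y = k.+1 -> (y <= x) = (adj_hi k <= x).
Proof.
move=> xk /stageS_adj_chain [ks yC]; have [_ [_ [_ above]]] := adjunct_step_at ks.
by apply: above; rewrite ?mem_adj_prefix.
Qed.

Lemma adj_lo_lt_stageS k y : stage y = k.+1 -> adj_lo k < y.
Proof.
move=> Ey; have [ks _] := stageS_adj_chain Ey.
rewrite lt_def (le_stageS (stage_adj_lo ks) Ey) lexx andbT.
by apply: contraTneq (stage_adj_lo ks) => E; rewrite -E Ey ltnn.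
Qed.

Lemma stageS_lt_adj_hi k y : stage y = k.+1 -> y < adj_hi k.
Proof.
move=> Ey; have [ks _] := stageS_adj_chain Ey.
rewrite lt_def (ge_stageS (stage_adj_hi ks) Ey) lexx andbT.
by apply: contraTneq (stage_adj_hi ks) => E; rewrite E Ey ltnn.
Qed.

Lemma stageS_incomparable k v y : (stage v <= k)%N -> adj_lo k < v < adj_hi k ->
  stage y = k.+1 -> ~~ (v >=< y).
Proof.
move=> vk /andP [lov vhi] Ey; rewrite /Order.comparable (le_stageS vk Ey) (ge_stageS vk Ey).
by rewrite !lt_geF.
Qed.

(* Coverings inside a prefix survive in the whole lattice: an element [w]
   strictly between [u] and [v] that appears later sits in a chain adjoined at
   a pair [a <= u < v <= b]; no earlier element separating [u] and [v] forces
   [(u, v) = (a, b)], although [a] is not covered by [b] at that stage. *)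
Lemma coversIn_adj_prefix_covers j u v : coversIn (adj_prefix j) u v -> covers u v.
Proof.
move=> /coversInP [uL vL uv gap]; rewrite !mem_adj_prefix in uL vL.
apply/coversP; split => // w.
suff stage_w m w' : (stage w' <= m)%N -> u < w' < v -> (stage w' <= j)%N.
  apply/negP => uwv; have := gap w; rewrite mem_adj_prefix (stage_w _ w (leqnn _) uwv).
  by rewrite uwv => /(_ isT).
elim: m w' => [|m IH] w'; first by rewrite leqn0 => /eqP ->.
rewrite leq_eqVlt ltnS => /orP [/eqP Em|]; last exact: IH.
move=> /andP [uw wv]; rewrite leqNgt; apply/negP => jm.
have [ms _] := stageS_adj_chain Em.
have um : (stage u <= m)%N by lia.
have vm : (stage v <= m)%N by lia.
have inner t : (stage t <= m)%N -> u < t < v -> False.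
  by move=> tm utv; have := gap t; rewrite mem_adj_prefix (IH t tm utv) utv => /(_ isT).
have ua : u <= adj_lo m by rewrite -(le_stageS um Em) ltW.
have bv : adj_hi m <= v by rewrite -(ge_stageS vm Em) ltW.
have ab := adj_lo_lt_hi ms.
have Eu : u = adj_lo m.
  apply/eqP; move: ua; rewrite le_eqVlt => /orP [//|ua].
  by case: (inner _ (stage_adj_lo ms)); rewrite ua (lt_le_trans ab bv).
have Ev : v = adj_hi m.
  apply/eqP; move: bv; rewrite le_eqVlt eq_sym => /orP [//|bv].
  by case: (inner _ (stage_adj_hi ms)); rewrite bv (le_lt_trans ua ab).
case/negP: (adj_pair_not_coversIn ms); rewrite -Eu -Ev.
apply/coversInP; split; rewrite ?mem_adj_prefix // => t; rewrite mem_adj_prefix => tm.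
by apply/negP => /(inner t tm).
Qed.

Lemma stage_meet x y : (stage (x `&` y) <= maxn (stage x) (stage y))%N.
Proof.
rewrite leqNgt; apply/negP; case E : (stage (x `&` y)) => [//|m] /[!gtn_max] /andP [xm ym].
have hx := ge_stageS xm E; have hy := ge_stageS ym E.
have := stageS_lt_adj_hi E; rewrite lt_leAnge lexI -hx -hy leIl leIr.
by rewrite andbF.
Qed.

Lemma stage_join x y : (stage (x `|` y) <= maxn (stage x) (stage y))%N.
Proof.
rewrite leqNgt; apply/negP; case E : (stage (x `|` y)) => [//|m] /[!gtn_max] /andP [xm ym].
have hx := le_stageS xm E; have hy := le_stageS ym E.
have := adj_lo_lt_stageS E; rewrite lt_leAnge leUx -hx -hy leUl leUr.
by rewrite andbF.
Qed.

(* The elements that may lie just below [z] without appearing after [z]. *)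
Definition lower_candidates z :=
  if stage z is k.+1 then adj_lo k :: adj_chain k else C0.

Lemma lower_candidates_chain z : is_chain (lower_candidates z).
Proof.
rewrite /lower_candidates; case E : (stage z) => [|k].
  by case: rep => _ [_ [[]]].
have [ks _] := stageS_adj_chain E.
have lo_cmp y : y \in adj_chain k -> adj_lo k >=< y.
  by move=> yC; apply/le_comparable/ltW/adj_lo_lt_stageS; apply: stage_adj_chain yC.
move=> y y'; rewrite !inE => /orP [/eqP ->|yC] /orP [/eqP ->|y'C].
- exact: comparablexx.
- exact: lo_cmp.
- by rewrite comparable_sym; apply: lo_cmp.
- exact: (adj_chain_is_chain ks).
Qed.

Lemma mem_lower_candidates y z :
  covers y z -> (stage y <= stage z)%N -> y \in lower_candidates z.
Proof.
rewrite /lower_candidates => yz; case E : (stage z) => [|k].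
  by rewrite leqn0 /stage; case: ifP => // ->.
rewrite leq_eqVlt ltnS inE => /orP [/eqP /stageS_adj_chain [_ ->]|yk]; first by rewrite orbT.
have lo_z := adj_lo_lt_stageS E.
have : y <= adj_lo k by rewrite -(le_stageS yk E) (ltW (covers_lt yz)).
rewrite le_eqVlt => /orP [-> //|ylo].
by case/coversP: yz => _ /(_ (adj_lo k)); rewrite ylo lo_z.
Qed.

Lemma covers_stage_gt y z : covers y z -> (stage z < stage y)%N ->
  exists k, [/\ stage y = k.+1, y \in adj_chain k & z = adj_hi k].
Proof.
move=> yz; case E : (stage y) => [//|k] zk; have [ks yC] := stageS_adj_chain E.
exists k; split => //; rewrite ltnS in zk.
have : adj_hi k <= z by rewrite -(ge_stageS zk E) ltW ?(covers_lt yz).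
rewrite le_eqVlt => /orP [/eqP //|hiz].
by case/coversP: yz => _ /(_ (adj_hi k)); rewrite (stageS_lt_adj_hi E) hiz.
Qed.

Lemma covers_stage_lt y z : covers y z -> (stage y < stage z)%N ->
  exists k, stage z = k.+1 /\ y = adj_lo k.
Proof.
move=> yz yz_stage; have := mem_lower_candidates yz (ltnW yz_stage).
rewrite /lower_candidates; case E : (stage z) yz_stage => [//|k] yk.
rewrite inE => /orP [/eqP ->|yC]; first by exists k.
by have [ks _] := stageS_adj_chain E; move: yk; rewrite (stage_adj_chain ks yC) ltnn.
Qed.

Definition rising := [set e : T * T | (stage e.1 <= stage e.2)%N].

(* A rising covering [y < z] is determined by [z], which is not the bottom. *)
Lemma card_rising_cover_edges : (#|cover_edges [set: T] :&: rising| < #|T|)%N.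
Proof.
rewrite -(card_in_imset (f := snd)); last first.
  move=> [y z] [y' z']; rewrite !inE /= => /andP [yz yzB] /andP [y'z y'zB] /= Ez.
  subst z'; congr (_, _); apply: (covers_comparable_eq yz y'z).
  exact: lower_candidates_chain (mem_lower_candidates yz yzB) (mem_lower_candidates y'z y'zB).
have [b bot] := exists_bottom t0.
apply: (@leq_ltn_trans #|~: [set b]|); last first.
  by rewrite cardsC1 prednK //; apply/card_gt0P; exists b.
apply: subset_leq_card; apply/subsetP => z /imsetP [[y z'] + ->] /=.
rewrite !inE /= => /andP [/covers_lt yz _]; apply: contraTneq yz => ->.
by apply/negP => /lt_le_trans /(_ (bot y)); rewrite ltxx.
Qed.

(* A falling covering [y < z] is determined by [stage y], which lies in
   [1, size steps]. *)
Lemma card_falling_cover_edges : (#|cover_edges [set: T] :\: rising| <= size steps)%N.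
Proof.
pose f (e : T * T) : 'I_(size steps).+1 := inord (stage e.1).
have val_f e : (f e : nat) = stage e.1 by rewrite /f inordK // ltnS stage_le.
rewrite -(card_in_imset (f := f)); last first.
  move=> [y z] [y' z']; rewrite !inE /= -!ltnNge => /andP [yzB yz] /andP [y'zB y'z] Ef.
  have [k [Ek yC Ez]] := covers_stage_gt yz yzB.
  have [k' [Ek' y'C Ez']] := covers_stage_gt y'z y'zB.
  have Ekk : k = k' by move: (congr1 (@nat_of_ord _) Ef); rewrite !val_f /= Ek Ek' => -[].
  subst k' z z'; congr (_, _); apply: (covers_comparable_eq yz y'z).
  by have [ks _] := stageS_adj_chain Ek; apply: (adj_chain_is_chain ks).
apply: (@leq_trans #|~: [set ord0 : 'I_(size steps).+1]|); last by rewrite cardsC1 card_ord.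
apply: subset_leq_card; apply/subsetP => i /imsetP [[y z] + ->].
rewrite !inE /= -ltnNge => /andP [yzB _]; apply/negP => /eqP /(congr1 (@nat_of_ord _)).
by rewrite val_f => /= E0; rewrite E0 in yzB.
Qed.

Lemma card_cover_edges_le : (#|cover_edges [set: T]| + 1 <= #|T| + size steps)%N.
Proof.
rewrite -(cardsID rising) addnAC addn1.
exact: leq_add card_rising_cover_edges card_falling_cover_edges.
Qed.

Section AdjunctPairs.
Variable k : nat.
Hypothesis ks : (k < size steps)%N.

Lemma exists_adj_prefix_between :
  exists2 z, (stage z <= k)%N & adj_lo k < z < adj_hi k.
Proof.
have loL : adj_lo k \in adj_prefix k by rewrite mem_adj_prefix stage_adj_lo.
have hiL : adj_hi k \in adj_prefix k by rewrite mem_adj_prefix stage_adj_hi.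
have [z] := not_coversIn_between loL hiL (adj_lo_lt_hi ks) (adj_pair_not_coversIn ks).
by rewrite mem_adj_prefix; exists z.
Qed.

(* With [z] from [exists_adj_prefix_between] and [y] in the adjoined chain,
   [adj_lo k = z `&` y] and [adj_hi k = z `|` y]. *)
Lemma adj_lo_meet_reducible : meet_reducible (adj_lo k).
Proof.
have [z zk /andP [loz zhi]] := exists_adj_prefix_between.
have [y /(stage_adj_chain ks) Ey] := exists_mem_adj_chain ks.
have loy := adj_lo_lt_stageS Ey.
have Ew : z `&` y = adj_lo k.
  apply/eqP; rewrite eq_le lexI (ltW loz) (ltW loy) andbT.
  have : (stage (z `&` y) <= k.+1)%N.
    by apply: leq_trans (stage_meet z y) _; rewrite geq_max Ey leqnn andbT leqW.
  rewrite leq_eqVlt ltnS => /orP [/eqP Ew|wk]; last by rewrite -(le_stageS wk Ey) leIr.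
  by have := ge_stageS zk Ew; rewrite leIl => /esym /(lt_le_trans zhi); rewrite ltxx.
apply/existsP; exists z; apply/existsP; exists y.
by rewrite (gt_eqF loz) (gt_eqF loy) Ew eqxx.
Qed.

Lemma adj_hi_join_reducible : join_reducible (adj_hi k).
Proof.
have [z zk /andP [loz zhi]] := exists_adj_prefix_between.
have [y /(stage_adj_chain ks) Ey] := exists_mem_adj_chain ks.
have yhi := stageS_lt_adj_hi Ey.
have Ew : z `|` y = adj_hi k.
  apply/eqP; rewrite eq_le leUx (ltW zhi) (ltW yhi) /=.
  have : (stage (z `|` y) <= k.+1)%N.
    by apply: leq_trans (stage_join z y) _; rewrite geq_max Ey leqnn andbT leqW.
  rewrite leq_eqVlt ltnS => /orP [/eqP Ew|wk]; last by rewrite -(ge_stageS wk Ey) leUr.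
  by have := le_stageS zk Ew; rewrite leUl => /esym /(lt_le_trans loz); rewrite ltxx.
apply/existsP; exists z; apply/existsP; exists y.
by rewrite (lt_eqF zhi) (lt_eqF yhi) Ew eqxx.
Qed.

Lemma exists_cover_adj_lo_prefix :
  exists2 w, covers (adj_lo k) w & (stage w <= k)%N /\ w < adj_hi k.
Proof.
have [z0 z0k /andP [lo_z0 z0_hi]] := exists_adj_prefix_between.
have loL : adj_lo k \in adj_prefix k by rewrite mem_adj_prefix stage_adj_lo.
have z0L : z0 \in adj_prefix k by rewrite mem_adj_prefix.
have [w lo_w w_z0] := exists_coversIn_above loL z0L lo_z0.
exists w; first exact: coversIn_adj_prefix_covers lo_w.
have /coversInP [_ + _ _] := lo_w; rewrite mem_adj_prefix => wk.
by split=> //; apply: le_lt_trans w_z0 z0_hi.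
Qed.

Lemma exists_cover_adj_lo_chain :
  exists2 y, covers (adj_lo k) y & stage y = k.+1 /\ y < adj_hi k.
Proof.
have [y /(stage_adj_chain ks) Ey] := exists_mem_adj_chain ks.
have loL : adj_lo k \in adj_prefix k.+1 by rewrite mem_adj_prefix (leqW (stage_adj_lo ks)).
have yL : y \in adj_prefix k.+1 by rewrite mem_adj_prefix Ey.
have [y1 lo_y1 y1_y] := exists_coversIn_above loL yL (adj_lo_lt_stageS Ey).
have lo_y1' := coversIn_adj_prefix_covers lo_y1.
have y1_hi := le_lt_trans y1_y (stageS_lt_adj_hi Ey).
exists y1 => //; split=> //.
have /coversInP [_ + _ _] := lo_y1; rewrite mem_adj_prefix leq_eqVlt ltnS.
case/orP => [/eqP //|y1k]; have := stageS_incomparable y1k.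
by rewrite (covers_lt lo_y1') y1_hi => /(_ y isT Ey); rewrite /Order.comparable y1_y.
Qed.

End AdjunctPairs.

End AdjunctRepresentation.

Section FundamentalBlock.
Context {d : Order.disp_t} {T : finLatticeType d}.
Implicit Types (i j k : nat) (a b p q v w y z : T).
Variables (t0 : T) (n : nat) (C0 : seq T) (steps : seq (seq T * (T * T))).
Hypothesis RC : @RC_lattice d T.
Hypothesis BB : basic_block_in [set: T].
Hypothesis rep : adjunct_rep C0 steps.
Hypothesis uniq_pairs : uniq (map snd steps).
Hypothesis n_ge2 : (2 <= n)%N.
Hypothesis card_reducible : #|[set y : T | reducible y]| = n.
Hypothesis nullity_T : nullity [set: T] = Posz 'C(n, 2).

Local Notation adj_lo := (adj_lo t0 steps).
Local Notation adj_hi := (adj_hi t0 steps).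
Local Notation stage := (stage C0 steps).

Definition red_seq : seq T := sort <=%O (enum [set y : T | reducible y]).
Definition red i := nth t0 red_seq i.

Lemma red_seq_sorted : sorted <%O red_seq.
Proof.
rewrite lt_sorted_uniq_le sort_uniq enum_uniq /=.
apply: (sort_sorted_in (P := mem [set y : T | reducible y])).
  by move=> a b; rewrite !inE; apply: RC.
by apply/allP => y; rewrite mem_enum.
Qed.

Lemma red_lt i j : (i < j < n)%N -> red i < red j.
Proof.
move=> /andP [ij jn]; have size_red : size red_seq = n by rewrite size_sort -cardE.
by apply: (sorted_ltn_nth lt_trans t0 red_seq_sorted) (ij); rewrite inE size_red // (ltn_trans ij).
Qed.

Lemma red_leE i j : (i < n)%N -> (j < n)%N -> (red i <= red j) = (i <= j)%N.
Proof.
move=> iN jN; case: (ltngtP i j) => [ij|ji|->]; rewrite ?lexx //.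
  by apply/ltW/red_lt; rewrite ij jN.
by apply: lt_geF; apply: red_lt; rewrite ji iN.
Qed.

Lemma red_ltE i j : (i < n)%N -> (j < n)%N -> (red i < red j) = (i < j)%N.
Proof. by move=> iN jN; rewrite lt_leAnge !red_leE //; case: ltngtP. Qed.

Lemma red_inj i j : (i < n)%N -> (j < n)%N -> red i = red j -> i = j.
Proof. by move=> iN jN E; apply/eqP; rewrite eqn_leq -(red_leE iN jN) -(red_leE jN iN) E lexx. Qed.

Lemma reducibleP y : reducible y <-> exists2 i, (i < n)%N & y = red i.
Proof.
have size_red : size red_seq = n by rewrite size_sort -cardE.
have mem_red x : (x \in red_seq) = reducible x by rewrite mem_sort mem_enum inE.
split=> [|[i iN ->]]; last by rewrite -mem_red mem_nth ?size_red.
rewrite -mem_red => yred; exists (index y red_seq); last by rewrite /red nth_index.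
by rewrite -size_red index_mem.
Qed.

Lemma reducible_red i : (i < n)%N -> reducible (red i).
Proof. by move=> iN; apply/reducibleP; exists i. Qed.

Definition reducible_pairs :=
  [set e : T * T | [&& reducible e.1, reducible e.2 & e.1 < e.2]].

Lemma card_reducible_pairs : #|reducible_pairs| = 'C(n, 2).
Proof.
pose s := [seq (red e.1, red e.2) | e <- lex_pairs n].
have uniq_s : uniq s.
  rewrite map_inj_in_uniq ?uniq_lex_pairs // => -[i j] [i' j'].
  rewrite !mem_lex_pairs /= => /andP [ij jn] /andP [ij' jn'] [Ei Ej].
  have iN := ltn_trans ij jn; have iN' := ltn_trans ij' jn'.
  by rewrite (red_inj iN iN' Ei) (red_inj jn jn' Ej).
rewrite -size_lex_pairs -(size_map (fun e => (red e.1, red e.2))) -(card_uniqP uniq_s).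
apply: eq_card => -[a b]; rewrite inE /=; apply/and3P/mapP => [[ra rb ab]|[[i j]]].
  have [i iN Ea] := (reducibleP a).1 ra; have [j jN Eb] := (reducibleP b).1 rb; subst a b.
  by exists (i, j) => //; rewrite mem_lex_pairs /= jN andbT -(red_ltE iN jN).
rewrite mem_lex_pairs /= => /andP [ij jn] [-> ->].
by rewrite !reducible_red ?(ltn_trans ij) // red_lt // ij jn.
Qed.

Lemma reducible_adj_lo k : (k < size steps)%N -> reducible (adj_lo k).
Proof. by move=> ks; rewrite /reducible (adj_lo_meet_reducible t0 rep ks) orbT. Qed.

Lemma reducible_adj_hi k : (k < size steps)%N -> reducible (adj_hi k).
Proof. by move=> ks; rewrite /reducible (adj_hi_join_reducible t0 rep ks). Qed.

Lemma adj_pair_reducible e : e \in map snd steps -> e \in reducible_pairs.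
Proof.
case/mapP => s /(nthP ([::], (t0, t0))) [k ks <-] ->; rewrite inE.
rewrite -[_.2.1]/(adj_lo k) -[_.2.2]/(adj_hi k).
by rewrite reducible_adj_lo ?reducible_adj_hi ?(adj_lo_lt_hi t0 rep ks).
Qed.

Lemma size_steps : size steps = 'C(n, 2).
Proof.
apply/eqP; rewrite eqn_leq; apply/andP; split.
  rewrite -card_reducible_pairs -(size_map snd) -(card_uniqP uniq_pairs).
  by apply: subset_leq_card; apply/subsetP => e; apply: adj_pair_reducible.
have := card_cover_edges_le t0 rep; have := nullity_T; rewrite (nullity_setT t0); lia.
Qed.

Lemma reducible_pair_adjunct a b : reducible a -> reducible b -> a < b ->
  exists2 k, (k < size steps)%N & adj_lo k = a /\ adj_hi k = b.
Proof.
move=> ra rb ab.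
have all_pairs : map snd steps =i reducible_pairs.
  apply/subset_cardP; last by apply/subsetP => e; apply: adj_pair_reducible.
  by rewrite (card_uniqP uniq_pairs) size_map card_reducible_pairs size_steps.
have : (a, b) \in map snd steps by rewrite all_pairs inE /= ra rb ab.
case/mapP => s /(nthP ([::], (t0, t0))) [k ks Es] Eab; exists k => //.
by rewrite /adj_lo /adj_hi Es -Eab.
Qed.

Lemma reducible_not_covers a b : reducible a -> reducible b -> ~~ covers a b.
Proof.
move=> ra rb; apply/negP => ab; have [k ks [Ea Eb]] := reducible_pair_adjunct ra rb (covers_lt ab).
case/negP: (adj_pair_not_coversIn t0 rep ks); rewrite Ea Eb; apply: covers_coversIn => //.
- by rewrite -Ea mem_adj_prefix // (stage_adj_lo t0 rep ks).
- by rewrite -Eb mem_adj_prefix // (stage_adj_hi t0 rep ks).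
Qed.

Lemma card_T_gt1 : (1 < #|T|)%N.
Proof. by apply: leq_trans n_ge2 _; rewrite -card_reducible max_card. Qed.

(* In a basic block, removing the doubly irreducible [z] lowers the nullity,
   which rules out the conclusion of [nullity_setD1_unbypassed]. *)
Lemma irreducible_bypassed z : ~~ reducible z -> bypassed z.
Proof.
move=> zN; apply: contraT => nbp; have DI := irreducible_doubly_irreducible zN.
have same := nullity_setD1_unbypassed card_T_gt1 DI nbp.
case: BB => [T1|[noDI|drop]].
- by move: card_T_gt1; rewrite -cardsT T1.
- by case: (noDI z).
- by move: same; rewrite drop //; lia.
Qed.

Definition lcover z := odflt z [pick p | covers p z].
Definition ucover z := odflt z [pick q | covers z q].

Section Irreducible.
Variable z : T.
Hypothesis zN : ~~ reducible z.

Lemma covers_lcover : covers (lcover z) z.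
Proof.
rewrite /lcover; case: pickP => // none.
have /existsP [p /existsP [q /existsP [w /and5P [pz _ _ _ _]]]] := irreducible_bypassed zN.
by have := none p; rewrite pz.
Qed.

Lemma covers_ucover : covers z (ucover z).
Proof.
rewrite /ucover; case: pickP => // none.
have /existsP [p /existsP [q /existsP [w /and5P [_ zq _ _ _]]]] := irreducible_bypassed zN.
by have := none q; rewrite zq.
Qed.

Lemma lcover_unique p : covers p z -> p = lcover z.
Proof.
have [_ [_ uniq_lo]] := irreducible_doubly_irreducible zN.
by move/uniq_lo; apply; apply: covers_lcover.
Qed.

Lemma ucover_unique q : covers z q -> q = ucover z.
Proof.
have [_ [uniq_up _]] := irreducible_doubly_irreducible zN.
by move/uniq_up; apply; apply: covers_ucover.
Qed.

Lemma irreducible_bypass : exists2 w, w != z & lcover z < w < ucover z.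
Proof.
have /existsP [p /existsP [q /existsP [w /and5P [pz zq wz pw wq]]]] := irreducible_bypassed zN.
by exists w; rewrite // -(lcover_unique pz) -(ucover_unique zq) pw.
Qed.

Lemma le_irreducible w : w != z -> (w <= z) = (w <= lcover z).
Proof.
move=> wz; apply/idP/idP => [wlez|wle]; last exact: le_trans wle (ltW (covers_lt covers_lcover)).
apply: le_unique_lower_cover covers_lcover _ _; first exact: lcover_unique.
by rewrite lt_neqAle wz.
Qed.

Lemma ge_irreducible w : w != z -> (z <= w) = (ucover z <= w).
Proof.
move=> wz; apply/idP/idP => [zlew|lew]; last exact: le_trans (ltW (covers_lt covers_ucover)) lew.
apply: le_unique_upper_cover covers_ucover _ _; first exact: ucover_unique.
by rewrite lt_neqAle eq_sym wz.
Qed.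

End Irreducible.

Lemma irreducible_incomparable z z' : ~~ reducible z -> ~~ reducible z' -> z != z' ->
  lcover z = lcover z' -> ~~ (z >=< z').
Proof.
move=> zN z'N zz' Elo; have z'z : z' != z by rewrite eq_sym.
rewrite /Order.comparable (le_irreducible z'N zz') (le_irreducible zN z'z) -{1}Elo.
have ltz := covers_lt (covers_lcover zN); have ltz' := covers_lt (covers_lcover z'N).
by rewrite -Elo in ltz'; rewrite !lt_geF.
Qed.

Lemma reducible_lcover z : ~~ reducible z -> reducible (lcover z).
Proof.
move=> zN; apply: contraT => pN; set p := lcover z in pN *.
have [w wp /andP [lo_w w_hi]] := irreducible_bypass pN.
rewrite -(ucover_unique pN (covers_lcover zN)) in w_hi.
have : w <= p by rewrite -(le_irreducible zN (negbT (lt_eqF w_hi))) ltW.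
rewrite le_eqVlt (negbTE wp) /= => wltp.
by case/coversP: (covers_lcover pN) => _ /(_ w); rewrite lo_w wltp.
Qed.

Lemma reducible_ucover z : ~~ reducible z -> reducible (ucover z).
Proof.
move=> zN; apply: contraT => qN; set q := ucover z in qN *.
have [w wq /andP [lo_w w_hi]] := irreducible_bypass qN.
rewrite -(lcover_unique qN (covers_ucover zN)) in lo_w.
have : q <= w by rewrite -(ge_irreducible zN (negbT (gt_eqF lo_w))) ltW.
rewrite le_eqVlt eq_sym (negbTE wq) /= => qltw.
by case/coversP: (covers_ucover qN) => _ /(_ w); rewrite qltw w_hi.
Qed.

Lemma stage_ucover z : ~~ reducible z -> (stage (ucover z) <= stage z)%N.
Proof.
move=> zN; rewrite leqNgt; apply/negP => lt_stage.
have [k [Ek Ez]] := covers_stage_lt t0 rep (covers_ucover zN) lt_stage.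
have [ks _] := stageS_adj_chain t0 rep Ek.
by move: zN; rewrite Ez reducible_adj_lo.
Qed.

(* Take upper covers [w] and [y] of [a] below [b], one appearing no later
   than [b] and one in the chain adjoined at [(a, b)].  Both are irreducible;
   if neither is covered by [b], their upper covers are reducible, hence
   comparable, and yet separated by the adjunct order. *)
Lemma irreducible_between a b : reducible a -> reducible b -> a < b ->
  exists z, [/\ ~~ reducible z, covers a z & covers z b].
Proof.
move=> ra rb ab; have [k ks [<- <-]] := reducible_pair_adjunct ra rb ab.
have irr v : covers (adj_lo k) v -> ~~ reducible v.
  by move=> lov; apply: contraL lov; apply: reducible_not_covers (reducible_adj_lo ks).
have [w lo_w [wk w_hi]] := exists_cover_adj_lo_prefix t0 rep ks.
have [y lo_y [Ey y_hi]] := exists_cover_adj_lo_chain t0 rep ks.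
have [wN yN] := (irr w lo_w, irr y lo_y).
have [Ew|ne_w] := eqVneq (ucover w) (adj_hi k); first by exists w; rewrite -Ew covers_ucover.
have [Ey'|ne_y] := eqVneq (ucover y) (adj_hi k); first by exists y; rewrite -Ey' covers_ucover.
have q_hi v : ~~ reducible v -> v < adj_hi k -> ucover v != adj_hi k -> ucover v < adj_hi k.
  by move=> vN v_hi ne; rewrite lt_neqAle ne -(ge_irreducible vN (negbT (gt_eqF v_hi))) ltW.
have wq := covers_lt (covers_ucover wN); have yq := covers_lt (covers_ucover yN).
have lo_q v : covers (adj_lo k) v -> ~~ reducible v -> adj_lo k < ucover v.
  by move=> lov vN; apply: lt_trans (covers_lt lov) (covers_lt (covers_ucover vN)).
have Eqy : stage (ucover y) = k.+1.
  have := stage_ucover yN; rewrite Ey leq_eqVlt ltnS.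
  case/orP => [/eqP //|qyk]; have := stageS_incomparable (t0 := t0) rep qyk.
  rewrite lo_q // q_hi // => /(_ y isT Ey).
  by rewrite /Order.comparable (ltW yq) orbT.
have qwk : (stage (ucover w) <= k)%N := leq_trans (stage_ucover wN) wk.
have := stageS_incomparable (t0 := t0) rep qwk; rewrite lo_q // q_hi //.
by move=> /(_ _ isT Eqy) /negP []; apply: RC; apply: reducible_ucover.
Qed.

(* [mid i j] is the element [c_k] of the paper adjoined at [(u_i, u_j)] and
   [twin i] is the element [x_i] of the chain [C0]. *)
Definition mid i j :=
  odflt t0 [pick z | [&& ~~ reducible z, covers (red i) z & covers z (red j)]].
Definition twin i := odflt t0
  [pick z | [&& ~~ reducible z, covers (red i) z, covers z (red i.+1) & z != mid i i.+1]].

Lemma mid_spec i j : (i < j < n)%N ->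
  [/\ ~~ reducible (mid i j), lcover (mid i j) = red i & ucover (mid i j) = red j].
Proof.
move=> /andP [ij jn]; rewrite /mid; case: pickP => [z /and3P [zN iz zj]|none].
  by rewrite -(lcover_unique zN iz) -(ucover_unique zN zj).
have [|z [zN iz zj]] := irreducible_between (reducible_red (ltn_trans ij jn)) (reducible_red jn) _.
  by rewrite red_lt // ij.
by have := none z; rewrite zN iz zj.
Qed.

Lemma between_consecutive w i : (i.+1 < n)%N -> red i < w < red i.+1 ->
  [/\ ~~ reducible w, lcover w = red i & ucover w = red i.+1].
Proof.
move=> iN /andP [lo_w w_hi]; have iN' := ltnW iN.
have wN : ~~ reducible w.
  apply/negP => /reducibleP [k kN Ek]; subst w.
  by move: lo_w w_hi; rewrite !red_ltE //; lia.
have [k kN Ek] := (reducibleP _).1 (reducible_lcover wN).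
have [l lN El] := (reducibleP _).1 (reducible_ucover wN).
have : red i <= red k by rewrite -Ek -(le_irreducible wN (negbT (lt_eqF lo_w))) ltW.
have : red k < red i.+1 by rewrite -Ek (lt_trans (covers_lt (covers_lcover wN)) w_hi).
have : red l <= red i.+1 by rewrite -El -(ge_irreducible wN (negbT (gt_eqF w_hi))) ltW.
have : red i < red l by rewrite -El (lt_trans lo_w (covers_lt (covers_ucover wN))).
rewrite !red_leE // !red_ltE // => il li1 ki1 ik.
by split; rewrite // ?Ek ?El; congr red; lia.
Qed.

Lemma twin_spec i : (i.+1 < n)%N -> [/\ ~~ reducible (twin i), lcover (twin i) = red i,
  ucover (twin i) = red i.+1 & twin i != mid i i.+1].
Proof.
move=> iN; rewrite /twin; case: pickP => [z /and4P [zN iz zi zc]|none].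
  by rewrite -(lcover_unique zN iz) -(ucover_unique zN zi).
have ii : (i < i.+1 < n)%N by rewrite ltnSn.
have [cN Elo Ehi] := mid_spec ii.
have [w wc] := irreducible_bypass cN; rewrite Elo Ehi => /(between_consecutive iN) [wN Ew Ew'].
have := none w; rewrite wN wc -{1}Ew -Ew' covers_lcover // covers_ucover //.
Qed.

Definition irreducibles := [set z : T | ~~ reducible z].

(* No covering joins two reducible elements, and an irreducible element has
   exactly one lower and one upper cover: every covering is [lcover z < z] or
   [z < ucover z] for a unique irreducible [z]. *)
Lemma card_cover_edges : #|cover_edges [set: T]| = (2 * #|irreducibles|)%N.
Proof.
have -> : cover_edges [set: T] =
    [set (lcover z, z) | z in irreducibles] :|: [set (z, ucover z) | z in irreducibles].
  apply/setP => -[a b]; rewrite inE /= -/(covers a b); apply/idP/idP => [ab|].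
    have [bN|bR] := boolP (~~ reducible b).
      rewrite in_setU; apply/orP; left; apply/imsetP.
      by exists b; rewrite ?inE // -(lcover_unique bN ab).
    have aN : ~~ reducible a.
      by apply: contraL (ab) => aR; apply: reducible_not_covers aR (negbNE bR).
    rewrite in_setU; apply/orP; right; apply/imsetP.
    by exists a; rewrite ?inE // -(ucover_unique aN ab).
  by rewrite in_setU => /orP [] /imsetP [z]; rewrite inE => zN [-> ->];
    [apply: covers_lcover | apply: covers_ucover].
have inj1 : {in irreducibles &, injective (fun z => (lcover z, z))} by move=> y z _ _ [].
have inj2 : {in irreducibles &, injective (fun z => (z, ucover z))} by move=> y z _ _ [].
rewrite cardsU_disjoint ?card_in_imset // ?addnn ?mul2n //.
rewrite disjoints_subset; apply/subsetP => _ /imsetP [z zN ->]; rewrite inE in zN *.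
by rewrite in_setC; apply/negP => /imsetP [y + [Ez _]]; rewrite -Ez inE reducible_lcover.
Qed.

Lemma card_T : #|T| = (n + #|irreducibles|)%N.
Proof.
rewrite -card_reducible -(cardsC [set y : T | reducible y]); congr (_ + _)%N.
by apply: eq_card => y; rewrite !inE.
Qed.

Lemma card_irreducibles : #|irreducibles| = ('C(n, 2) + n.-1)%N.
Proof.
have := nullity_T; rewrite (nullity_setT t0) card_cover_edges card_T; lia.
Qed.

Definition mids := [seq mid e.1 e.2 | e <- lex_pairs n].
Definition twins := [seq twin i | i <- iota 0 n.-1].

Lemma uniq_mids_twins : uniq (mids ++ twins).
Proof.
rewrite cat_uniq; apply/and3P; split.
- rewrite map_inj_in_uniq ?uniq_lex_pairs // => -[i j] [i' j'].
  rewrite !mem_lex_pairs /= => ijn i'j'n E.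
  have [_ Ei Ej] := mid_spec ijn; have [_ Ei' Ej'] := mid_spec i'j'n.
  case/andP: ijn => ij jn; case/andP: i'j'n => ij' jn'.
  have Eii : red i = red i' by rewrite -Ei -Ei' E.
  have Ejj : red j = red j' by rewrite -Ej -Ej' E.
  by rewrite (red_inj (ltn_trans ij jn) (ltn_trans ij' jn') Eii) (red_inj jn jn' Ejj).
- apply/hasPn => y /mapP [i]; rewrite mem_iota add0n => /andP [_ iN] {y}->.
  have iN' : (i.+1 < n)%N by lia.
  apply/negP => /mapP [[a b]]; rewrite mem_lex_pairs /= => abn E.
  have [_ Ea Eb] := mid_spec abn; have [_ Ei Ei1 twc] := twin_spec iN'.
  case/andP: abn => ab bn.
  have Eai : a = i by apply: red_inj (ltn_trans ab bn) (ltnW iN') _; rewrite -Ea -Ei E.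
  have Ebi : b = i.+1 by apply: red_inj bn iN' _; rewrite -Eb -Ei1 E.
  by rewrite E Eai Ebi eqxx in twc.
- rewrite map_inj_in_uniq ?iota_uniq // => i i'; rewrite !mem_iota !add0n.
  move=> /andP [_ iN] /andP [_ i'N] E.
  have iN' : (i.+1 < n)%N by lia. have i'N' : (i'.+1 < n)%N by lia.
  have [_ Ei _ _] := twin_spec iN'; have [_ Ei' _ _] := twin_spec i'N'.
  by apply: red_inj (ltnW iN') (ltnW i'N') _; rewrite -Ei -Ei' E.
Qed.

(* All elements in [mids ++ twins] are irreducible, and there are as many as
   irreducible elements. *)
Lemma mem_mids_twins z : (z \in mids ++ twins) = ~~ reducible z.
Proof.
suff -> : mids ++ twins =i irreducibles by rewrite inE.
apply/subset_cardP.
  rewrite (card_uniqP uniq_mids_twins) card_irreducibles size_cat !size_map.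
  by rewrite size_lex_pairs size_iota.
apply/subsetP => y; rewrite mem_cat inE => /orP [] /mapP [e].
  by rewrite mem_lex_pairs => /mid_spec [] ? _ _ {y}->.
rewrite mem_iota add0n => /andP [_ iN] {y}->.
have iN' : (e.+1 < n)%N by lia.
by case: (twin_spec iN').
Qed.

Definition zig := zigzag n red twin.

Lemma zigP y : reflect ((exists2 i, (i < n)%N & y = red i) \/
                         (exists2 i, (i < n.-1)%N & y = twin i)) (y \in zig).
Proof. by apply: zigzagP; lia. Qed.

Lemma red_lt_twin i j : (i <= j)%N -> (j.+1 < n)%N -> red i < twin j.
Proof.
move=> ij jN; have [tN Elo _ _] := twin_spec jN.
apply: (@le_lt_trans _ _ (red j)); first by rewrite red_leE //; lia.
by rewrite -Elo; apply: covers_lt (covers_lcover tN).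
Qed.

Lemma twin_lt_red i j : (j < i)%N -> (i < n)%N -> twin j < red i.
Proof.
move=> ji iN; have [tN _ Ehi _] := twin_spec (leq_ltn_trans ji iN).
apply: (@lt_le_trans _ _ (red j.+1)); last by rewrite red_leE //; lia.
by rewrite -Ehi; apply: covers_lt (covers_ucover tN).
Qed.

Lemma zig_chain : is_chain zig.
Proof.
have red_twin i j : (i < n)%N -> (j < n.-1)%N -> red i >=< twin j.
  move=> iN jN; have [ij|ji] := leqP i j.
    by apply/le_comparable/ltW/red_lt_twin => //; lia.
  by rewrite comparable_sym; apply/le_comparable/ltW/twin_lt_red.
move=> y1 y2 /zigP [[i iN ->]|[i iN ->]] /zigP [[j jN ->]|[j jN ->]].
- by apply: RC; apply: reducible_red.
- exact: red_twin.
- by rewrite comparable_sym; apply: red_twin.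
- wlog ij : i j iN jN / (i <= j)%N.
    by move=> sym; have [/sym|/ltnW/sym] := leqP i j; last rewrite comparable_sym; apply.
  have [->|ne] := eqVneq i j; first exact: comparablexx.
  apply/le_comparable/ltW/(@lt_trans _ _ (red j)); last by apply: red_lt_twin => //; lia.
  by apply: twin_lt_red; lia.
Qed.

Lemma zig_maximal z : z \notin zig -> exists2 y, y \in zig & ~~ (z >=< y).
Proof.
move=> zZ; have zN : ~~ reducible z.
  by apply: contra zZ => /reducibleP [i iN ->]; apply/zigP; left; exists i.
have [i iN Ei] := (reducibleP _).1 (reducible_lcover zN).
have [j jN Ej] := (reducibleP _).1 (reducible_ucover zN).
have ij : (i < j)%N.
  rewrite -(red_ltE iN jN) -Ei -Ej.
  exact: lt_trans (covers_lt (covers_lcover zN)) (covers_lt (covers_ucover zN)).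
have [Eij|ne] := eqVneq j i.+1.
  subst j; have [tN Elo _ _] := twin_spec jN.
  exists (twin i); first by apply/zigP; right; exists i => //; lia.
  apply: irreducible_incomparable zN tN _ _; last by rewrite Ei Elo.
  by apply: contraNneq zZ => ->; apply/zigP; right; exists i => //; lia.
have i1N : (i.+1 < n)%N by lia.
exists (red i.+1); first by apply/zigP; left; exists i.+1.
have nz : red i.+1 != z by apply: contraNneq zZ => <-; apply/zigP; left; exists i.+1.
rewrite /Order.comparable (le_irreducible zN nz) (ge_irreducible zN nz) Ei Ej.
by rewrite !red_leE //; apply/norP; split; apply/negP; lia.
Qed.

Lemma mem_zig_mids y : y \in zig ++ mids.
Proof.
rewrite mem_cat; have [yR|yN] := boolP (reducible y).
  by have [i iN ->] := (reducibleP y).1 yR; apply/orP; left; apply/zigP; left; exists i.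
move: yN; rewrite -mem_mids_twins mem_cat => /orP [->|/mapP [i]]; first by rewrite orbT.
rewrite mem_iota add0n => /andP [_ iN] ->.
by apply/orP; left; apply/zigP; right; exists i.
Qed.

Lemma uniq_zig_mids : uniq (zig ++ mids).
Proof.
apply/card_uniqP; have -> : #|zig ++ mids| = #|T| by apply: eq_card => y; rewrite mem_zig_mids.
rewrite size_cat size_zigzag ?size_map ?size_lex_pairs ?card_T ?card_irreducibles; lia.
Qed.

Definition pieces := [seq ([:: mid e.1 e.2], (red e.1, red e.2)) | e <- lex_pairs n].

Lemma flatten_pieces (s : seq (nat * nat)) :
  flatten (map fst [seq ([:: mid e.1 e.2], (red e.1, red e.2)) | e <- s]) =
  [seq mid e.1 e.2 | e <- s].
Proof. by elim: s => //= e s ->. Qed.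

Lemma zig_rep : adjunct_rep zig pieces.
Proof.
rewrite /adjunct_rep flatten_pieces; split; first exact: uniq_zig_mids.
split; first exact: mem_zig_mids.
split; first by split; [apply: zig_chain | apply: zig_maximal].
move=> s1 C a b s2 Epieces.
have : (C, (a, b)) \in pieces by rewrite Epieces mem_cat in_cons eqxx orbT.
case/mapP => -[i j]; rewrite mem_lex_pairs /= => ijn [EC Ea Eb]; subst C a b.
have mid_new : mid i j \notin zig ++ flatten (map fst s1).
  have := uniq_zig_mids; rewrite /mids -flatten_pieces -/pieces Epieces.
  rewrite map_cat flatten_cat /= catA cat_uniq => /and3P [_ /hasPn + _].
  by apply; rewrite inE eqxx.
set L1 := [set y in zig ++ flatten (map fst s1)].
have redL k : (k < n)%N -> red k \in L1.
  by move=> kN; rewrite inE mem_cat; apply/orP; left; apply/zigP; left; exists k.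
have neq y : y \in L1 -> y != mid i j.
  by move=> yL; apply: contraNneq mid_new => <-; rewrite inE in yL.
have [mN Elo Ehi] := mid_spec ijn; case/andP: ijn => ij jn; have iN := ltn_trans ij jn.
split; [split | split; [split | split]] => //.
- by move=> y y'; rewrite !inE => /eqP -> /eqP ->; apply: comparablexx.
- by apply: is_lattice_on_reducibles => y /reducibleP [k kN ->]; apply: redL.
- exact: redL.
- exact: redL.
- by rewrite red_lt // ij.
- apply/negP => /coversInP [_ _ _ gap].
  have [Ej|ne] := eqVneq j i.+1.
    subst j; have tL : twin i \in L1.
      by rewrite inE mem_cat; apply/orP; left; apply/zigP; right; exists i => //; lia.
    by move: (gap _ tL); rewrite red_lt_twin ?twin_lt_red.
  have i1j : (i.+1 < j)%N by lia.
  have h1 : red i < red i.+1 by apply: red_lt; rewrite ltnSn (ltn_trans i1j jn).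
  have h2 : red i.+1 < red j by apply: red_lt; rewrite i1j jn.
  by move: (gap _ (redL _ (ltn_trans i1j jn))); rewrite h1 h2.
- by move=> y y' yL; rewrite inE => /eqP ->; rewrite (le_irreducible mN (neq y yL)) Elo.
- by move=> y y' yL; rewrite inE => /eqP ->; rewrite (ge_irreducible mN (neq y yL)) Ehi.
Qed.

Lemma covers_twin i : (i < n.-1)%N -> covers (red i) (twin i) /\ covers (twin i) (red i.+1).
Proof.
move=> iN; have iN' : (i.+1 < n)%N by lia.
by have [tN <- <- _] := twin_spec iN'; rewrite covers_lcover ?covers_ucover.
Qed.

Lemma twin_mid_incomparable i : (i < n.-1)%N -> ~~ (twin i >=< mid i i.+1).
Proof.
move=> iN; have iN' : (i.+1 < n)%N by lia.
have ii : (i < i.+1 < n)%N by rewrite ltnSn.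
have [tN Elo _ tm] := twin_spec iN'; have [mN Elo' _] := mid_spec ii.
by apply: irreducible_incomparable; rewrite ?Elo ?Elo'.
Qed.

Lemma card_T_formula : #|T| = (2 * n - 1 + 'C(n, 2))%N.
Proof. by rewrite card_T card_irreducibles; lia. Qed.

Lemma card_covers : #|[set e : T * T | covers e.1 e.2]| = (2 * n - 2 + 2 * 'C(n, 2))%N.
Proof. by rewrite [LHS]card_cover_edges card_irreducibles; lia. Qed.

End FundamentalBlock.

Theorem mainTheorem9 (d : Order.disp_t) (T : finLatticeType d) (n : nat) :
  (2 <= n)%N ->
  @fundamental_basic_block d T ->
  #|[set x : T | reducible x]| = n ->
  nullity [set: T] = Posz 'C(n, 2) ->
  exists (u x : nat -> T) (c : nat -> nat -> T),
    [/\ [/\ (forall i j, (i < j < n)%N -> u i < u j),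
            (forall y : T, reducible y <-> exists2 i, (i < n)%N & y = u i) &
            (forall i, (i < n.-1)%N -> covers (u i) (x i) /\ covers (x i) (u i.+1))],
        adjunct_rep (zigzag n u x)
          [seq ([:: c p.1 p.2], (u p.1, u p.2)) | p <- lex_pairs n],
        (forall i, (i < n.-1)%N -> ~~ (x i >=< c i i.+1)) &
        [/\ #|T| = (2 * n - 1 + 'C(n, 2))%N,
            #|[set p : T * T | covers p.1 p.2]| = (2 * n - 2 + 2 * 'C(n, 2))%N &
            nullity [set: T] = Posz 'C(n, 2)]].
Proof.
move=> n_ge2 [RC [BB [C0 [steps [rep uniq_pairs]]]]] card_red nullity_T.
have [t0 _] : exists t0 : T, t0 \in [set y : T | reducible y].
  by apply/card_gt0P; rewrite card_red; lia.
exists (red t0), (twin t0), (mid t0); split.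
- split=> [i j|y|i]; [exact: red_lt | exact: reducibleP |].
  exact: (covers_twin t0 RC BB rep uniq_pairs n_ge2 card_red nullity_T).
- exact: (zig_rep t0 RC BB rep uniq_pairs n_ge2 card_red nullity_T).
- exact: (twin_mid_incomparable t0 RC BB rep uniq_pairs n_ge2 card_red nullity_T).
- split=> //; first exact: (card_T_formula t0 RC BB rep uniq_pairs n_ge2 card_red nullity_T).
  exact: (card_covers t0 RC BB rep uniq_pairs n_ge2 card_red nullity_T).
Qed.
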